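(* Let $r,t,\ell,m$ be integers with $1 \le r \le \ell \le m$ and $1 \le t < \ell$. Then $$\hat{\mathfrak w}_r(t;\ell,m) = A(r,t)-A(r,t-1)+ q^{m-1}\mu_{t-1}(\ell-1,m),$$ where for $0\le s<\ell$, $$A(r,s):=q^{s}\, \hat{\mathfrak w}_{r-1}(s;\ell-1,m-1)+q^{s-1}\bigl(\mu_s(\ell-1, m)-\mu_s(\ell-1,m-1)\bigr).$$
   Context: $q$ is a prime power. For nonnegative integers $a,b,t$, $\mu_t(a,b)$ denotes the number of $a\times b$ matrices over $\mathbb{F}_q$ of rank exactly $t$ (so $\mu_0(a,b)=1$ and $\mu_t(a,b)=0$ if $t>\min(a,b)$). For an $a\times b$ matrix $M=(m_{ij})$ and $0\le r\le a$, $\tau_r(M)=m_{11}+\cdots+m_{rr}$, with $\tau_0=0$. For $0\le r\le a$ and $t\ge 0$, $\mathfrak w_r(t;a,b)$ is the number of $a\times b$ matrices $M$ over $\mathbb{F}_q$ of rank exactly $t$ with $\tau_r(M)\ne 0$ (so $\mathfrak w_0(t;a,b)=0$ and $\mathfrak w_r(0;a,b)=0$), and $\hat{\mathfrak w}_r(t;a,b)=\mathfrak w_r(t;a,b)/(q-1)$. *)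

(* The field F_q is modelled as an arbitrary finite field F;
   q := #|F| (finite fields are exactly the F_q with q a prime power). *)
From HB Require Import structures.
From mathcomp Require Import all_boot all_order all_algebra all_field.
Set Implicit Arguments. Unset Strict Implicit. Unset Printing Implicit Defensive.
Import Order.TTheory GRing.Theory Num.Theory.
Local Open Scope ring_scope.

Definition mu (F : finFieldType) (t a b : nat) : nat :=
  #|[set M : 'M[F]_(a, b) | \rank M == t]|.

(* tau_r(M) = m_11 + ... + m_rr (0-indexed: entries (i,i) with i < r) *)
Definition tau (F : finFieldType) (a b : nat) (r : nat) (M : 'M[F]_(a, b)) : F :=
  \sum_(i < a) \sum_(j < b | ((i : nat) == j) && (i < r)%N) M i j.

Definition w (F : finFieldType) (r t a b : nat) : nat :=
  #|[set M : 'M[F]_(a, b) | (\rank M == t) && (tau r M != 0)]|.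

Definition what (F : finFieldType) (r t a b : nat) : rat :=
  (w F r t a b)%:R / ((#|F|)%:R - 1).

(* A(r,s) = q^s hat w_{r-1}(s;l-1,m-1) + q^(s-1) (mu_s(l-1,m) - mu_s(l-1,m-1)),
   computed in rat; q^(s-1) is an integer power (so q^(-1) when s = 0). *)
Definition A_rs (F : finFieldType) (l m r s : nat) : rat :=
  (#|F|%:R : rat) ^+ s * what F r.-1 s l.-1 m.-1
  + (#|F|%:R : rat) ^ (s%:Z - 1)
    * ((mu F s l.-1 m)%:R - (mu F s l.-1 m.-1)%:R).

From HB Require Import structures.
From mathcomp Require Import all_boot all_order all_algebra all_field.
From mathcomp Require Import ring.
Set Implicit Arguments. Unset Strict Implicit. Unset Printing Implicit Defensive.
Import Order.TTheory GRing.Theory Num.Theory.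
Local Open Scope ring_scope.

(* Write an (l x m) matrix as M = [[x, u], [v, N]] with N of size (l-1) x (m-1).
   Then tau_r(M) = x + tau_(r-1)(N), and rank M - rank N is 0, 1 or 2 according
   to whether u lies in the row space of N, v in its column space, and x equals
   u N^+ v (N^+ a pseudo-inverse; x - u N^+ v is the Schur complement).  For a
   fixed N of rank s, coordinates in bases of the two spaces turn u N^+ v into a
   dot product on F^s, whose level sets are counted explicitly.  Summing over N
   writes w_r(t; l, m) in terms of mu and w_(r-1) in size (l-1) x (m-1); the
   column recursion for mu(s; l-1, m) then makes the identity a rational
   function identity in q. *)

Section BorderedRank.
Variable F : fieldType.

Lemma mxrank_col_mx_rV m n (r : 'rV[F]_n) (A : 'M_(m, n)) :
  \rank (col_mx r A) = (\rank A + ~~ (r <= A)%MS)%N.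
Proof.
rewrite -addsmxE.
have [le_A eq_A] := mxrank_leqif_sup (addsmxSr r A).
have le_rA : (\rank (r + A)%MS <= \rank A + 1)%N.
  by rewrite addnC (leq_trans (mxrank_adds_leqif r A).1) ?leq_add2r ?rank_leq_row.
move: eq_A; rewrite addsmx_sub submx_refl andbT.
case: (r <= A)%MS => [/eqP <-|/negbT neq_rA]; first by rewrite addn0.
by apply/eqP; rewrite eqn_leq le_rA addn1 ltn_neqAle neq_rA le_A.
Qed.

Lemma mxrank_row_mx_cV m n (v : 'cV[F]_m) (A : 'M_(m, n)) :
  \rank (row_mx v A) = (\rank A + ~~ (v^T <= A^T)%MS)%N.
Proof. by rewrite -mxrank_tr tr_row_mx mxrank_col_mx_rV mxrank_tr. Qed.

Definition pinv_form n k (N : 'M[F]_(n, k)) (u : 'rV_k) (v : 'cV_n) : F :=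
  (u *m pinvmx N *m v) 0 0.

Lemma row_mx_scalar_submx n k (x : F) (u : 'rV_k) (v : 'cV_n) (N : 'M_(n, k)) :
  (v^T <= N^T)%MS ->
  (row_mx x%:M u <= row_mx v N)%MS = (u <= N)%MS && (x == pinv_form N u v).
Proof.
move=> /submxP[z /(congr1 trmx)]; rewrite trmx_mul !trmxK => ->.
apply/submxP/andP => [[y]|[uN /eqP ->]].
  rewrite mul_mx_row => /eq_row_mx[xE uE]; have uN : (u <= N)%MS by rewrite uE submxMl.
  by rewrite uN /pinv_form mulmxA (mulmxKpV uN) uE -mulmxA -xE mxE eqxx mulr1n.
exists (u *m pinvmx N); rewrite mul_mx_row (mulmxKpV uN).
by rewrite /pinv_form -mx11_scalar mulmxA.
Qed.

Lemma mxrank_bordered n k (x : F) (u : 'rV_k) (v : 'cV_n) (N : 'M_(n, k)) :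
  \rank (block_mx x%:M u v N) =
    (\rank N + ~~ (u <= N)%MS + ~~ (v^T <= N^T)%MS
     + [&& (u <= N)%MS, (v^T <= N^T)%MS & x != pinv_form N u v])%N.
Proof.
have [vN|vNn] := boolP (v^T <= N^T)%MS.
  rewrite /block_mx mxrank_col_mx_rV mxrank_row_mx_cV vN row_mx_scalar_submx //.
  by case: (u <= N)%MS; rewrite /= ?addn0.
rewrite -mxrank_tr tr_block_mx /block_mx mxrank_col_mx_rV mxrank_row_mx_cV !trmxK.
have -> : (row_mx x%:M^T v^T <= row_mx u^T N^T)%MS = false.
  apply/negP => /submxP[y]; rewrite mul_mx_row => /eq_row_mx[_ vE].
  by move/negP: vNn; apply; rewrite vE submxMl.
by rewrite mxrank_tr andbF addn0 addnAC.
Qed.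

End BorderedRank.

Section SpaceSums.
Variables (F : finFieldType) (n k : nat) (N : 'M[F]_(n, k)).

Lemma sum_rowspace (V : nmodType) (g : 'rV[F]_k -> V) :
  \sum_(u | (u <= N)%MS) g u = \sum_(y : 'rV_(\rank N)) g (y *m row_base N).
Proof.
rewrite (reindex_onto (mulmxr (row_base N)) (mulmxr (pinvmx (row_base N)))) /=.
  apply: eq_bigl => y; rewrite -(eq_row_base N) submxMl /=.
  by rewrite -mulmxA mulmxVp ?row_base_free // mulmx1 eqxx.
by move=> u uN; rewrite mulmxKpV // eq_row_base.
Qed.

Lemma mulmx_col_base (z : 'cV_(\rank N)) :
  col_base N *m z = N *m (pinvmx (row_base N) *m z).
Proof.
rewrite -[X in X *m (_ *m z)](mulmx_base N) -mulmxA (mulmxA (row_base N)).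
by rewrite mulmxVp ?row_base_free ?mul1mx.
Qed.

Lemma sum_colspace (V : nmodType) (g : 'cV[F]_n -> V) :
  \sum_(v | (v^T <= N^T)%MS) g v = \sum_(z : 'cV_(\rank N)) g (col_base N *m z).
Proof.
rewrite (reindex_onto (mulmx (col_base N)) (mulmx (pinvmx (col_base N)))) /=.
  apply: eq_bigl => z; rewrite mulmxA mulVpmx ?col_base_full // mul1mx eqxx andbT.
  by rewrite mulmx_col_base trmx_mul submxMl.
move=> v /submxP[w /(congr1 trmx)]; rewrite trmx_mul !trmxK => ->.
rewrite -[X in X *m w^T](mulmx_base N) -mulmxA (mulmxA (pinvmx _)).
by rewrite mulVpmx ?col_base_full // mul1mx.
Qed.

Lemma pinv_form_base (y : 'rV_(\rank N)) (z : 'cV_(\rank N)) :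
  pinv_form N (y *m row_base N) (col_base N *m z) = (y *m z) 0 0.
Proof.
have yN : (y *m row_base N <= N)%MS by rewrite -(eq_row_base N) submxMl.
rewrite mulmx_col_base /pinv_form mulmxA (mulmxKpV yN).
by rewrite -mulmxA (mulmxA (row_base N)) mulmxVp ?row_base_free // mul1mx.
Qed.

End SpaceSums.

Lemma sum_boolrM (R : pzSemiRingType) (T : finType) (P : pred T) (f : T -> R) :
  \sum_(x : T) (P x)%:R * f x = \sum_(x | P x) f x.
Proof.
by rewrite [RHS]big_mkcond; apply: eq_bigr => x _; case: (P x); rewrite ?mul1r ?mul0r.
Qed.

Lemma sum_boolr (R : pzSemiRingType) (T : finType) (P : pred T) :
  \sum_(x : T) ((P x)%:R : R) = \sum_(x | P x) 1.
Proof. by rewrite -[RHS]sum_boolrM; apply: eq_bigr => x _; rewrite mulr1. Qed.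

Lemma natr_negb (R : pzRingType) (b : bool) : ((~~ b)%:R : R) = 1 - b%:R.
Proof. by case: b; rewrite ?subrr ?subr0. Qed.

Lemma natr_and (R : pzSemiRingType) (a b : bool) : ((a && b)%:R : R) = a%:R * b%:R.
Proof. by case: a; rewrite ?mul1r ?mul0r. Qed.

Lemma natr_eq_addb (R : pzRingType) (r s : nat) (b : bool) :
  (((r + b)%N == s)%:R : R) = (r == s)%:R + b%:R * ((r.+1 == s)%:R - (r == s)%:R).
Proof. by case: b; rewrite ?addn0 ?addn1 ?mul1r ?mul0r ?addr0 // addrC subrK. Qed.

Lemma sumr_const_mul (R : pzSemiRingType) (T : finType) (c : R) :
  \sum_(x : T) c = c * #|T|%:R.
Proof. by rewrite sumr_const mulr_natr. Qed.

Lemma natr_card_set (R : pzSemiRingType) (T : finType) (P : pred T) :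
  (#|[set x | P x]|%:R : R) = \sum_(x : T) (P x)%:R.
Proof. by rewrite sum_boolr -sum1dep_card natr_sum. Qed.

Section FiniteField.
Variable F : finFieldType.
Local Notation q := #|F|.
Local Notation Q := (#|F|%:R : rat).

Lemma sum_notin_rowspace n k (N : 'M[F]_(n, k)) :
  \sum_(u : 'rV_k) ((~~ (u <= N)%MS)%:R : rat) = Q ^+ k - Q ^+ \rank N.
Proof.
rewrite (eq_bigr _ (fun u _ => natr_negb _ _)) sumrB sumr_const card_mx mul1n natrX.
by rewrite sum_boolr sum_rowspace sumr_const card_mx mul1n natrX.
Qed.

Lemma sum_notin_colspace n k (N : 'M[F]_(n, k)) :
  \sum_(v : 'cV_n) ((~~ (v^T <= N^T)%MS)%:R : rat) = Q ^+ n - Q ^+ \rank N.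
Proof.
rewrite (eq_bigr _ (fun v _ => natr_negb _ _)) sumrB sumr_const card_mx muln1 natrX.
by rewrite sum_boolr sum_colspace sumr_const card_mx muln1 natrX.
Qed.

Definition dot_fibre s (y : 'rV[F]_s) (d : F) := [set z : 'cV_s | (y *m z) 0 0 == d].

Lemma card_dot_fibre s (y : 'rV[F]_s) (d : F) : y != 0 -> #|dot_fibre y d| = (q ^ s.-1)%N.
Proof.
move=> y_neq0; have [j yj_neq0] : exists j, y 0 j != 0.
  apply/existsP; apply: contraR y_neq0 => /existsPn y0.
  by apply/eqP/matrixP => i j; rewrite ord1 mxE; apply/eqP/negPn/y0.
pose z0 : 'cV_s := \col_i (if i == j then (y 0 j)^-1 else 0).
have yz0 : (y *m z0) 0 0 = 1.
  rewrite mxE (bigD1 j) //= big1 => [|i /negbTE ij]; last by rewrite mxE ij mulr0.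
  by rewrite mxE eqxx addr0 mulfV.
have fibre_le d1 d2 : (#|dot_fibre y d1| <= #|dot_fibre y d2|)%N.
  have shift_inj : injective (fun z : 'cV_s => z + (d2 - d1) *: z0) by move=> ? ? /addIr.
  rewrite -(card_imset _ shift_inj); apply/subset_leq_card/subsetP => z1 /imsetP[z].
  rewrite !inE => /eqP yz ->; rewrite mulmxDr -scalemxAr [X in X == _]mxE [X in _ + X]mxE yz yz0.
  by rewrite mulr1 addrC subrK.
have card_all : (\sum_(d2 : F) #|dot_fibre y d2| = q ^ s)%N.
  rewrite -[s in (_ ^ s)%N]muln1 -card_mx -sum1_card.
  rewrite (partition_big (fun z : 'cV_s => (y *m z) 0 0) predT) //=.
  by apply: eq_bigr => d2 _; rewrite -sum1dep_card.
have {card_all} : (q * #|dot_fibre y d| = q ^ s)%N.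
  rewrite -card_all -sum_nat_const; apply: eq_bigr => d2 _.
  by apply/eqP; rewrite eqn_leq !fibre_le.
case: s y y_neq0 j {yj_neq0 z0 yz0 fibre_le} => [|s] y _ j; first by case: j.
by rewrite expnS => /eqP; rewrite eqn_pmul2l ?(ltnW (card_finNzRing_gt1 F)) // => /eqP.
Qed.

Definition dot_neq (s : nat) (e : bool) : rat :=
  Q ^+ s * Q ^+ s - (e%:R * Q ^+ s + (Q ^+ s - 1) * Q ^+ s.-1).

Lemma sum_dot_neq s (d : F) :
  \sum_(y : 'rV[F]_s) \sum_(z : 'cV_s) (((y *m z) 0 0 != d)%:R : rat) = dot_neq s (d == 0).
Proof.
under eq_bigr => y _ do
  rewrite (eq_bigr _ (fun z _ => natr_negb _ _)) sumrB sumr_const -natr_card_set -/(dot_fibre y d).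
rewrite sumrB sumr_const (bigD1 0) //= !card_mx mul1n muln1 -mulr_natr.
have -> : #|dot_fibre (0 : 'rV_s) d| = ((d == 0%R) * q ^ s)%N.
  have [->|d_neq0] := eqVneq d 0.
    rewrite mul1n -[s in (_ ^ s)%N]muln1 -card_mx.
    by apply: eq_card => z; rewrite !inE mul0mx mxE eqxx.
  apply/eqP; rewrite mul0n cards_eq0; apply/eqP/setP => z.
  by rewrite !inE mul0mx mxE eq_sym (negbTE d_neq0).
rewrite (eq_bigr (fun _ => (q ^ s.-1)%:R)) => [|y /card_dot_fibre -> //].
rewrite sumr_const cardC1 card_mx mul1n /dot_neq -!mulrnA mul1r !natrM.
by rewrite -[(q ^ s).-1]subn1 natrB ?expn_gt0 ?(ltnW (card_finNzRing_gt1 F)) // !natrX (mulrC (_ ^+ s.-1)).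
Qed.

Lemma sum_block_mx (V : nmodType) n k (g : 'M[F]_(1 + n, 1 + k) -> V) :
  \sum_M g M = \sum_(N : 'M_(n, k)) \sum_(u : 'rV_k) \sum_(v : 'cV_n) \sum_(x : F)
                  g (block_mx x%:M u v N).
Proof.
rewrite (reindex (fun p : 'M[F]_(n, k) * ('rV_k * ('cV_n * F)) =>
                    block_mx p.2.2.2%:M p.2.1 p.2.2.1 p.1)) /=; last first.
  apply: onW_bij; exists (fun M => (drsubmx M, (ursubmx M, (dlsubmx M, ulsubmx M 0 0)))).
    by move=> [N [u [v x]]]; rewrite /= block_mxKdr block_mxKur block_mxKdl block_mxKul mxE eqxx.
  by move=> M /=; rewrite -mx11_scalar submxK.
under [RHS]eq_bigr => N _ do under eq_bigr => u _ do rewrite pair_bigA.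
by under [RHS]eq_bigr => N _ do rewrite pair_bigA; rewrite pair_bigA.
Qed.

Lemma sum_row_mx (V : nmodType) n k (g : 'M[F]_(n, 1 + k) -> V) :
  \sum_M g M = \sum_(N : 'M_(n, k)) \sum_(v : 'cV_n) g (row_mx v N).
Proof.
rewrite (reindex (fun p : 'M[F]_(n, k) * 'cV_n => row_mx p.2 p.1)) /=; last first.
  apply: onW_bij; exists (fun M => (rsubmx M, lsubmx M)).
    by move=> [N v]; rewrite /= row_mxKr row_mxKl.
  by move=> M /=; rewrite hsubmxK.
by rewrite pair_bigA.
Qed.

Lemma sum_addr_neq0 (c : F) : \sum_(x : F) ((x + c != 0)%:R : rat) = Q - 1.
Proof.
rewrite (eq_bigr _ (fun x _ => natr_negb _ _)) sumrB sumr_const.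
by under eq_bigr do rewrite addr_eq0; rewrite sum_boolr big_pred1_eq.
Qed.

Lemma sum_bordered_corner n k (N : 'M[F]_(n, k)) (u : 'rV_k) (v : 'cV_n) t (c : F) :
  \sum_(x : F) ((\rank (block_mx x%:M u v N) == t) && (x + c != 0))%:R =
    (((\rank N).+1 + (~~ (u <= N)%MS && ~~ (v^T <= N^T)%MS))%N == t)%:R * (Q - 1)
  + ((u <= N)%MS && (v^T <= N^T)%MS)%:R *
      (((\rank N == t)%:R - ((\rank N).+1 == t)%:R) * (pinv_form N u v + c != 0)%:R).
Proof.
under eq_bigr do rewrite mxrank_bordered natr_and.
have [uN|uNn] := boolP (u <= N)%MS; have [vN|vNn] := boolP (v^T <= N^T)%MS;
  rewrite /= ?addn0 ?addn1 ?addSn ?mul0r ?addr0; try by rewrite -mulr_sumr sum_addr_neq0.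
set s := \rank N; set y := pinv_form N u v; pose D : rat := (s.+1 == t)%:R - (s == t)%:R.
under eq_bigr => x _ do rewrite natr_eq_addb natr_negb -/D.
rewrite (eq_bigr (fun x => ((s == t)%:R + D) * (x + c != 0)%:R
                           - D * ((x == y)%:R * (x + c != 0)%:R))) => [|x _]; last by ring.
rewrite sumrB -!mulr_sumr sum_addr_neq0 sum_boolrM big_pred1_eq /D; ring.
Qed.

(* For an n x k matrix N of rank s and c in F, with e = (c == 0), the triples
   (x, u, v) with x <> -c for which [[x, u], [v, N]] has rank s, s + 1, s + 2
   number dot_neq s e, gain1 n k s e and gain2 n k s respectively; out_pairs
   counts the (u, v) outside the row and column spaces of N. *)
Definition out_pairs n k s : rat := (Q ^+ k - Q ^+ s) * (Q ^+ n - Q ^+ s).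

Definition gain1 n k s (e : bool) : rat :=
  (Q - 1) * (Q ^+ k * Q ^+ n - out_pairs n k s) - dot_neq s e.

Definition gain2 n k s : rat := (Q - 1) * out_pairs n k s.

Definition bordered_count n k s t (e : bool) : rat :=
  (s == t)%:R * dot_neq s e + (s.+1 == t)%:R * gain1 n k s e
  + (s.+2 == t)%:R * gain2 n k s.

Lemma sum_bordered n k (N : 'M[F]_(n, k)) t (c : F) :
  \sum_(u : 'rV_k) \sum_(v : 'cV_n) \sum_(x : F)
     ((\rank (block_mx x%:M u v N) == t) && (x + c != 0))%:R
  = bordered_count n k (\rank N) t (c == 0).
Proof.
under eq_bigr do under eq_bigr do rewrite sum_bordered_corner.
set s := \rank N.
have out_sum : \sum_(u : 'rV_k) \sum_(v : 'cV_n)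
    ((~~ (u <= N)%MS && ~~ (v^T <= N^T)%MS)%:R : rat) = out_pairs n k s.
  under eq_bigr do under eq_bigr do rewrite natr_and.
  by rewrite -big_distrlr /= sum_notin_rowspace sum_notin_colspace.
have in_sum : \sum_(u : 'rV_k) \sum_(v : 'cV_n) (((u <= N)%MS && (v^T <= N^T)%MS)%:R *
     (pinv_form N u v + c != 0)%:R : rat) = dot_neq s (c == 0).
  under eq_bigr do under eq_bigr do rewrite natr_and -mulrA.
  under eq_bigr do rewrite -mulr_sumr sum_boolrM sum_colspace.
  rewrite sum_boolrM sum_rowspace.
  under eq_bigr do under eq_bigr do rewrite pinv_form_base addr_eq0.
  by rewrite sum_dot_neq oppr_eq0.
rewrite (eq_bigr (fun u => \sum_(v : 'cV_n) ((s.+1 == t)%:R * (Q - 1)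
    + ((s.+2 == t)%:R - (s.+1 == t)%:R) * (Q - 1)
      * (~~ (u <= N)%MS && ~~ (v^T <= N^T)%MS)%:R
    + ((s == t)%:R - (s.+1 == t)%:R)
      * (((u <= N)%MS && (v^T <= N^T)%MS)%:R * (pinv_form N u v + c != 0)%:R)))); last first.
  by move=> u _; apply: eq_bigr => v _; rewrite natr_eq_addb; ring.
under eq_bigr do rewrite !big_split -!mulr_sumr /=.
rewrite !big_split -!mulr_sumr /= out_sum in_sum !sumr_const_mul !card_mx mul1n muln1.
by rewrite /bordered_count /gain1 /gain2 !natrX; ring.
Qed.

Lemma tau_block_mx n k r (x : F) (u : 'rV_k) (v : 'cV_n) (N : 'M_(n, k)) :
  (0 < r)%N -> tau r (block_mx x%:M u v N) = x + tau r.-1 N.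
Proof.
move=> r_gt0; rewrite /tau big_split_ord big_ord1 /=; congr (_ + _).
  rewrite big_split_ord /= big_pred0_eq addr0 big_mkcond big_ord1 /= r_gt0.
  by rewrite block_mxEul mxE eqxx mulr1n.
apply: eq_bigr => i _; rewrite big_split_ord /= big_pred0 ?add0r => [|j]; last by rewrite ord1.
apply: eq_big => [j|j _]; last by rewrite block_mxEdr.
by rewrite /= !add1n eqSS; case: r r_gt0.
Qed.

Lemma w_succ r t n k : (0 < r)%N ->
  ((w F r t n.+1 k.+1)%:R : rat) =
    \sum_(N : 'M[F]_(n, k)) bordered_count n k (\rank N) t (tau r.-1 N == 0).
Proof.
move=> r_gt0; rewrite /w natr_card_set (sum_block_mx (fun M : 'M[F]_(1 + n, 1 + k) =>
  ((\rank M == t) && (tau r M != 0))%:R)).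
apply: eq_bigr => N _; rewrite -sum_bordered.
by under eq_bigr do under eq_bigr do under eq_bigr do rewrite tau_block_mx //.
Qed.

Lemma sum_rank_tau n k r s (h : nat -> bool -> rat) :
  \sum_(N : 'M[F]_(n, k)) (\rank N == s)%:R * h (\rank N) (tau r N == 0) =
    h s false * (w F r s n k)%:R + h s true * ((mu F s n k)%:R - (w F r s n k)%:R).
Proof.
rewrite /w /mu !natr_card_set -sumrB !mulr_sumr -big_split; apply: eq_bigr => N _ /=.
have [-> | _] := eqVneq (\rank N) s; last by rewrite !mul0r !mulr0 addr0.
by case: (tau r N == 0); rewrite /= ?mul1r ?mul0r ?mulr0 ?mulr1 ?subrr ?subr0 ?addr0 ?add0r.
Qed.

Lemma sum_rank n k s (h : nat -> rat) :
  \sum_(N : 'M[F]_(n, k)) (\rank N == s)%:R * h (\rank N) = h s * (mu F s n k)%:R.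
Proof.
rewrite /mu natr_card_set mulr_sumr; apply: eq_bigr => N _.
by have [-> | _] := eqVneq (\rank N) s; rewrite ?mul1r ?mulr1 ?mul0r ?mulr0.
Qed.

Lemma mu_succ_col s n k :
  ((mu F s n k.+1)%:R : rat) = Q ^+ s * (mu F s n k)%:R
    + (0 < s)%:R * (Q ^+ n - Q ^+ s.-1) * (mu F s.-1 n k)%:R.
Proof.
rewrite {1}/mu natr_card_set (sum_row_mx (fun M : 'M[F]_(n, 1 + k) => (\rank M == s)%:R)).
under eq_bigr => N _ do under eq_bigr => v _ do rewrite mxrank_row_mx_cV natr_eq_addb.
under eq_bigr => N _ do
  rewrite big_split /= -mulr_suml sum_notin_colspace sumr_const_mul card_mx muln1 natrX.
rewrite (eq_bigr (fun N => (\rank N == s)%:R * Q ^+ \rank N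
                          + ((\rank N).+1 == s)%:R * (Q ^+ n - Q ^+ \rank N))) => [|N _]; last by ring.
rewrite big_split /= (sum_rank _ _ _ (fun r => Q ^+ r)); case: s => [|s].
  by rewrite big1 ?mul0r ?addr0 // => N _; rewrite mul0r.
by under eq_bigr do rewrite eqSS; rewrite (sum_rank _ _ _ (fun r => Q ^+ n - Q ^+ r)) mul1r.
Qed.

Lemma w_rank0 r a b : w F r 0 a b = 0%N.
Proof.
apply/eqP; rewrite cards_eq0; apply/eqP/setP => M; rewrite !inE.
apply/negbTE/nandP; have [/eqP rk0|] := boolP (\rank M == 0)%N; [right | by left].
have -> : M = 0 by apply/eqP; rewrite -mxrank_eq0 rk0.
by rewrite negbK /tau big1 // => i _; rewrite big1 // => j _; rewrite mxE.
Qed.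

Lemma sum_bordered_count n k r t :
  \sum_(N : 'M[F]_(n, k)) bordered_count n k (\rank N) t.+1 (tau r N == 0) =
    dot_neq t.+1 false * (w F r t.+1 n k)%:R
  + dot_neq t.+1 true * ((mu F t.+1 n k)%:R - (w F r t.+1 n k)%:R)
  + (gain1 n k t false * (w F r t n k)%:R
     + gain1 n k t true * ((mu F t n k)%:R - (w F r t n k)%:R))
  + (0 < t)%:R * gain2 n k t.-1 * (mu F t.-1 n k)%:R.
Proof.
rewrite !big_split /= sum_rank_tau.
under [X in _ + X + _]eq_bigr do rewrite eqSS.
rewrite sum_rank_tau; congr (_ + _ + _).
case: t => [|t]; first by rewrite big1 ?mul0r // => N _; rewrite mul0r.
by under eq_bigr do rewrite !eqSS; rewrite (sum_rank _ _ _ (gain2 n k)) mul1r.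
Qed.

End FiniteField.

Theorem mainTheorem3 (F : finFieldType) (r t l m : nat) :
  (1 <= r)%N -> (r <= l)%N -> (l <= m)%N -> (1 <= t)%N -> (t < l)%N ->
  what F r t l m =
    A_rs F l m r t - A_rs F l m r t.-1
    + (#|F|%:R : rat) ^+ m.-1 * (mu F t.-1 l.-1 m)%:R.
Proof.
move=> r_gt0 r_le_l l_le_m t_gt0 t_lt_l.
case: l r_le_l l_le_m t_lt_l => [|n]; first by rewrite leqn0 => /eqP r0; rewrite r0 in r_gt0.
case: m => [|k] // _ _ _; case: t t_gt0 => [|t] // _.
have Q1_neq0 : (#|F|%:R : rat) - 1 != 0.
  by rewrite subr_eq0 pnatr_eq1 neq_ltn card_finNzRing_gt1 orbT.
rewrite /A_rs /what /= w_succ // sum_bordered_count !mu_succ_col.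
rewrite /gain1 /gain2 /out_pairs /dot_neq.
case: t => [|t].
  by rewrite w_rank0 subrr expr0z /=; set z := (_ ^ (0%Z - 1)); field.
have predzS j : (j.+1%:Z - 1 = j)%R by rewrite intS addrC addKr.
by rewrite !predzS -!exprnP /= !exprS; field.
Qed.
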